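(* Let $\mathfrak S$ be a controlled Markov process and $\mathcal G$ its induced abstract $2\frac12$-player game graph (as described in the context). Let $U\subseteq V_0$, let $v\in U$, and let $\pi_0$ be a deterministic memoryless strategy of Player 0 such that $\inf_{\pi_1}P_v^{\pi_0,\pi_1}(\mathcal G\models\square U)=1$, where the infimum ranges over all strategies $\pi_1$ of Player 1. Then the refinement $\rho$ of $\pi_0$ ensures $P_s^{\rho}(\mathfrak S\models\square Q^{-1}(U))=1$ for every state $s\in v$.
   Context: CMP: $\mathfrak S=(\mathcal S,\mathcal U,T_{\mathfrak s})$ with $\mathcal S$ a Borel space, $\mathcal U$ finite, and $T_{\mathfrak s}(\cdot\mid s,u)$ a probability measure on the Borel sets of $\mathcal S$. A stationary policy is a universally measurable $\rho:\mathcal S\to\mathcal U$; $P_s^\rho$ is the induced measure on infinite paths from $s$ with $s^{k+1}\sim T_{\mathfrak s}(\cdot\mid s^k,\rho(s^k))$. $\mathcal P=\langle B_1,\dots,B_\ell\rangle$ is a given partition of $\mathcal S$ into measurable sets. Abstraction: $\widehat{\mathcal S}$ is a finite partition of $\mathcal S$ into nonempty (measurable) cells each contained in a single $B_i$. $Q:\mathcal S\to\widehat{\mathcal S}$ maps $s$ to its cell; $Q^{-1}(\widehat U)=\bigcup_{\widehat s\in\widehat U}\widehat s$. Functions $\overline F,\underline F:\widehat{\mathcal S}\times\mathcal U\to2^{\widehat{\mathcal S}}$ satisfy $\overline F(\widehat s,u)\supseteq\{\widehat s'\mid\exists s\in\widehat s.\ T_{\mathfrak s}(\widehat s'\mid s,u)>0\}$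 and $\underline F(\widehat s,u)\subseteq\{\widehat s'\mid\exists\varepsilon>0\ \forall s\in\widehat s.\ T_{\mathfrak s}(\widehat s'\mid s,u)\ge\varepsilon\}$. Game graph $\mathcal G=\langle V,E,\langle V_0,V_1,V_r\rangle\rangle$: $V_0=\widehat{\mathcal S}$, $V_1=\widehat{\mathcal S}\times\mathcal U$, $V_r=\bigcup_{v_1\in V_1}V_r(v_1)$ with $V_r(v_1)=\{v_r\subseteq\widehat{\mathcal S}\mid\underline F(v_1)\subseteq v_r\subseteq\overline F(v_1),\ 1\le|v_r|\le|\underline F(v_1)|+1\}$; $E(v_0)=\{(v_0,u)\mid u\in\mathcal U\}$, $E(v_1)=V_r(v_1)$, $E(v_r)=\{v_0\in V_0\mid v_0\in v_r\}$. Player 0 moves at $V_0$, Player 1 at $V_1$, and at $V_r$ the successor is uniformly random. Strategies $\pi_i:V^*V_i\to\mathit{Dist}(V)$ are supported on successors; a deterministic memoryless Player 0 strategy assigns each $v_0$ a single successor $\pi_0(v_0)=(v_0,u)$. $P_v^{\pi_0,\pi_1}$ is the induced measure on runs. A run of $\mathcal G$ satisfies a specification over $V_0$ (such as $\square U$: always in $U$) iff its projection onto its subsequence of $V_0$-vertices does. Refinement: the refinement of a deterministic memoryless $\pi_0$ is $\rho$ with $\rho(s)=u$ whenever $s\in\widehat s$ and $\pi_0(\widehat s)=(\widehat s,u)$. *)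

From HB Require Import structures.
From mathcomp Require Import all_boot all_order all_algebra.
From mathcomp Require Import all_classical all_reals all_analysis measurable_realfun.
Set Implicit Arguments. Unset Strict Implicit. Unset Printing Implicit Defensive.
Import Order.TTheory GRing.Theory Num.Theory.
Local Open Scope classical_set_scope.
Local Open Scope ring_scope.

Definition is_stoch_kernel (d : measure_display) (S : measurableType d)
  (R : realType) (Act : finType) (T : S -> Act -> probability S R) : Prop :=
  forall (u : Act) (A : set S), measurable A ->
    measurable_fun [set: S] (fun s => T s u A).

(* cmp_stay T rho A n s = P_s^rho(s^0, ..., s^n all lie in A): the       *)
(* probability of the cylinder event "the first n+1 states are in A"   *)
(* under the path measure induced by the stationary policy rho, given   *)
(* by the standard iterated-kernel (Ionescu-Tulcea) formula.            *)
Fixpoint cmp_stay (d : measure_display) (S : measurableType d)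
  (R : realType) (Act : finType) (T : S -> Act -> probability S R)
  (rho : S -> Act) (A : set S) (n : nat) (s : S) : \bar R :=
  match n with
  | 0 => (\1_A s)%:E
  | n'.+1 => ((\1_A s)%:E *
      \int[T s (rho s)]_(x in [set: S]) cmp_stay T rho A n' x)%E
  end.

(* P_s^rho(S |= [] A): the measure of the event "always in A", i.e. of  *)
(* the decreasing intersection of the cylinder events above, which by   *)
(* continuity from above is the infimum of their probabilities.        *)
Definition cmp_always (d : measure_display) (S : measurableType d)
  (R : realType) (Act : finType) (T : S -> Act -> probability S R)
  (rho : S -> Act) (A : set S) (s : S) : \bar R :=
  ereal_inf [set cmp_stay T rho A n s | n in [set: nat]].

Definition cell (d : measure_display) (S : measurableType d) (Shat : finType)
  (Q : S -> Shat) (c : Shat) : set S := Q @^-1` [set c].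

Definition Qinv (d : measure_display) (S : measurableType d) (Shat : finType)
  (Q : S -> Shat) (U : {set Shat}) : set S := [set s | Q s \in U].

Definition is_meas_partition (d : measure_display) (S : measurableType d)
  (l : nat) (B : 'I_l -> set S) : Prop :=
  (forall i, measurable (B i)) /\
  (forall i j, i != j -> B i `&` B j = set0) /\
  (forall s, exists i, B i s).

Definition is_abstraction (d : measure_display) (S : measurableType d)
  (Shat : finType) (l : nat) (B : 'I_l -> set S) (Q : S -> Shat) : Prop :=
  (forall c, measurable (cell Q c)) /\
  (forall c, exists s, Q s = c) /\
  (forall c, exists i, cell Q c `<=` B i).

Definition over_approx (d : measure_display) (S : measurableType d)
  (R : realType) (Act Shat : finType) (T : S -> Act -> probability S R)
  (Q : S -> Shat) (Fbar : Shat -> Act -> {set Shat}) : Prop :=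
  forall (c : Shat) (u : Act) (c' : Shat),
    (exists s, Q s = c /\ (0 < T s u (cell Q c'))%E) -> c' \in Fbar c u.

Definition under_approx (d : measure_display) (S : measurableType d)
  (R : realType) (Act Shat : finType) (T : S -> Act -> probability S R)
  (Q : S -> Shat) (Fund : Shat -> Act -> {set Shat}) : Prop :=
  forall (c : Shat) (u : Act) (c' : Shat), c' \in Fund c u ->
    exists eps : R, 0 < eps /\
      forall s, Q s = c -> (eps%:E <= T s u (cell Q c'))%E.

Inductive vertex (Shat Act : finType) : Type :=
  | V0v of Shat
  | V1v of Shat * Act
  | Vrv of {set Shat}.

Definition in_Vr (Shat Act : finType) (Fbar Fund : Shat -> Act -> {set Shat})
  (c : Shat) (u : Act) (vr : {set Shat}) : bool :=
  [&& Fund c u \subset vr, vr \subset Fbar c u,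
      0 < #|vr| & #|vr| <= #|Fund c u|.+1]%N.

(* A Player-1 strategy maps each history in V^* V_1 (a sequence of      *)
(* vertices ending in V1v (c,u)) to a probability distribution over V   *)
(* supported on the successors E((c,u)) = V_r(c,u); such a distribution *)
(* is represented by its (finitely supported) mass function on the     *)
(* V_r-vertices, i.e. on {set Shat}.                                    *)
Definition p1_strategy (R : realType) (Shat Act : finType) :=
  seq (vertex Shat Act) -> {set Shat} -> R.

Definition valid_p1 (R : realType) (Shat Act : finType)
  (Fbar Fund : Shat -> Act -> {set Shat}) (pi1 : p1_strategy R Shat Act) : Prop :=
  forall (h : seq (vertex Shat Act)) (c : Shat) (u : Act),
    let hv := rcons h (V1v (c, u)) in
    (forall vr, 0 <= pi1 hv vr) /\
    (\sum_(vr : {set Shat}) pi1 hv vr = 1) /\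
    (forall vr, pi1 hv vr != 0 -> in_Vr Fbar Fund c u vr).

(* game_stay pi0 pi1 U n h c = probability, when the play has history h *)
(* and is currently at the V0-vertex c, that the current and the next n *)
(* V0-vertices all lie in U.  Player 0 plays the deterministic          *)
(* memoryless strategy c |-> (c, pi0 c); Player 1 plays pi1; at a V_r   *)
(* vertex vr the successor is uniform on the members of vr.             *)
Fixpoint game_stay (R : realType) (Shat Act : finType) (pi0 : Shat -> Act)
  (pi1 : p1_strategy R Shat Act) (U : {set Shat}) (n : nat)
  (h : seq (vertex Shat Act)) (c : Shat) : R :=
  if c \in U then
    match n with
    | 0 => 1
    | n'.+1 =>
        let h1 := rcons (rcons h (V0v Act c)) (V1v (c, pi0 c)) in
        \sum_(vr : {set Shat})
          pi1 h1 vr * (#|vr|%:R)^-1 *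
          \sum_(c' in vr) game_stay pi0 pi1 U n' (rcons h1 (Vrv Act vr)) c'
    end
  else 0.

(* P_v^{pi0,pi1}(G |= [] U): measure of the event that all V0-vertices  *)
(* of the run lie in U, i.e. the infimum of the probabilities of the    *)
(* decreasing cylinder events "the first n+1 V0-vertices lie in U".     *)
Definition game_always (R : realType) (Shat Act : finType) (pi0 : Shat -> Act)
  (pi1 : p1_strategy R Shat Act) (U : {set Shat}) (v : Shat) : \bar R :=
  ereal_inf [set (game_stay pi0 pi1 U n [::] v)%:E | n in [set: nat]].

Definition refinement (d : measure_display) (S : measurableType d)
  (Shat Act : finType) (Q : S -> Shat) (pi0 : Shat -> Act) : S -> Act :=
  fun s => pi0 (Q s).

From HB Require Import structures.
From mathcomp Require Import all_boot all_order all_algebra.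
From mathcomp Require Import all_classical all_reals all_analysis measurable_realfun.
Import Order.TTheory GRing.Theory Num.Theory.
Local Open Scope classical_set_scope.
Local Open Scope ring_scope.

Set Implicit Arguments.
Unset Strict Implicit.
Unset Printing Implicit Defensive.

(* Call a cell almost-surely safe when, against every Player-1 strategy, pi0
   keeps the game in U with probability 1.  Safe cells are closed under the
   Fbar-successors of pi0: from c, Player 1 may move to the random vertex
   {c'} ∪ Fund(c, pi0 c), from which c' is drawn with positive probability, so
   c' is safe as well.  By over-approximation, the refined policy therefore
   leaves the union of the safe cells with probability 0 at every step; this
   union contains the cell v and lies inside Q^{-1}(U). *)

Lemma mean_eq1 (R : numFieldType) (I : finType) (A : {set I}) (F : I -> R) i :
  i \in A -> {in A, forall j, F j <= 1} ->
  #|A|%:R^-1 * \sum_(j in A) F j = 1 -> F i = 1.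
Proof.
move=> Ai F_le1 mean1.
have cardA : (#|A|%:R : R) != 0 by rewrite pnatr_eq0 -lt0n card_gt0; apply/set0Pn; exists i.
have sumF : \sum_(j in A) F j = #|A|%:R.
  by apply: (mulfI (invr_neq0 cardA)); rewrite mean1 mulVf.
have gap0 : \sum_(j in A) (1 - F j) = 0 by rewrite sumrB sumF -sum1_card natr_sum subrr.
apply/eqP; rewrite eq_sym -subr_eq0; apply/eqP.
by apply: (psumr_eq0P _ gap0) => // j /F_le1; rewrite subr_ge0.
Qed.

Section game.
Variables (R : realType) (Shat Act : finType) (Fbar Fund : Shat -> Act -> {set Shat}).
Variables (pi0 : Shat -> Act) (U : {set Shat}).

Local Notation strategy := (p1_strategy R Shat Act).
Local Notation valid := (valid_p1 Fbar Fund).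

Lemma game_stay_ge0_le1 (pi1 : strategy) : valid pi1 ->
  forall n h c, 0 <= game_stay pi0 pi1 U n h c <= 1.
Proof.
move=> valid_pi1; elim=> [|n IH] h c /=; case: ifP => _ //=; rewrite ?lexx ?ler01 //.
have [pi1_ge0 [pi1_sum1 _]] := valid_pi1 (rcons h (V0v Act c)) c (pi0 c).
set h1 := rcons _ _.
have sum_le : forall vr : {set Shat},
    0 <= \sum_(c' in vr) game_stay pi0 pi1 U n (rcons h1 (Vrv Act vr)) c' <= #|vr|%:R.
  move=> vr; rewrite sumr_ge0 /= => [|c' _]; last by case/andP: (IH (rcons h1 (Vrv Act vr)) c').
  rewrite -sum1_card natr_sum; apply: ler_sum => c' _.
  by case/andP: (IH (rcons h1 (Vrv Act vr)) c').
apply/andP; split.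
  apply: sumr_ge0 => vr _; rewrite -mulrA mulr_ge0 // mulr_ge0 ?invr_ge0 //.
  by case/andP: (sum_le vr).
rewrite -[X in _ <= X]pi1_sum1; apply: ler_sum => vr _; rewrite -mulrA ler_piMr //.
have [->|cardvr] := eqVneq #|vr| 0%N; first by rewrite invr0 mul0r ler01.
by rewrite ler_pdivrMl ?mulr1 ?ltr0n ?lt0n //; case/andP: (sum_le vr).
Qed.

Lemma game_stay_cat (pi1 pi1' : strategy) (h0 : seq (vertex Shat Act)) :
  (forall h, (0 < size h)%N -> pi1' (h0 ++ h) = pi1 h) ->
  forall n h c, game_stay pi0 pi1' U n (h0 ++ h) c = game_stay pi0 pi1 U n h c.
Proof.
move=> pi1'E; elim=> [|n IH] h c //=; case: ifP => _ //.
rewrite !rcons_cat; apply: eq_bigr => vr _.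
rewrite pi1'E ?size_rcons //; congr (_ * _).
by apply: eq_bigr => c' _; rewrite rcons_cat IH.
Qed.

Definition as_safe (c : Shat) : Prop :=
  forall pi1 : strategy, valid pi1 -> forall n, game_stay pi0 pi1 U n [::] c = 1.

Lemma as_safe_in (pi1 : strategy) c : valid pi1 -> as_safe c -> c \in U.
Proof.
move=> valid_pi1 /(_ pi1 valid_pi1 0%N) /=.
by case: ifP => // _ /esym/eqP; rewrite oner_eq0.
Qed.

Lemma valid_p1_exists v :
  ereal_inf [set game_always pi0 pi1 U v | pi1 in [set p : strategy | valid p]] = 1%E ->
  exists pi1 : strategy, valid pi1.
Proof.
apply: contraPP => /forallNP no_valid.
suff -> : [set game_always pi0 pi1 U v | pi1 in [set p : strategy | valid p]] = set0.
  by rewrite ereal_inf0.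
by apply/seteqP; split => // x [pi1 /no_valid].
Qed.

Lemma as_safe_of_inf v :
  ereal_inf [set game_always pi0 pi1 U v | pi1 in [set p : strategy | valid p]] = 1%E ->
  as_safe v.
Proof.
move=> inf1 pi1 valid_pi1 n; apply/le_anti/andP; split.
  by case/andP: (game_stay_ge0_le1 valid_pi1 n [::] v).
rewrite -lee_fin -inf1; apply: le_trans (ereal_inf_lbound _) (ereal_inf_lbound _).
- by exists pi1.
- by exists n.
Qed.

(* After the forced first move to vr0, histories are shifted past the prefix
   [:: V0v c; V1v (c, pi0 c); Vrv vr0], so pi1 plays as if the game restarted. *)
Definition commit_p1 (c : Shat) (vr0 : {set Shat}) (pi1 : strategy) : strategy :=
  fun h => if `[< h = [:: V0v Act c; V1v (c, pi0 c)] >] then fun vr => (vr == vr0)%:R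
           else if (3 < size h)%N then pi1 (drop 3 h) else pi1 h.

Lemma valid_commit_p1 c vr0 (pi1 : strategy) :
  in_Vr Fbar Fund c (pi0 c) vr0 -> valid pi1 -> valid (commit_p1 c vr0 pi1).
Proof.
move=> vr0_Vr valid_pi1 h c1 u /=; rewrite /commit_p1.
case: asboolP => [hE|_].
  have [-> ->] : c1 = c /\ u = pi0 c.
    by move: (congr1 (last (V0v Act c)) hE); rewrite last_rcons; case.
  split=> [vr|]; first by rewrite ler0n.
  split=> [|vr /=]; last by have [->|_] := eqVneq vr vr0; rewrite ?mulr0n ?eqxx.
  by rewrite (bigD1 vr0) //= eqxx big1 ?addr0 // => vr /negbTE ->.
case: ifP => [|_]; last exact: valid_pi1.
by rewrite size_rcons ltnS => long_h; rewrite drop_rcons //; apply: valid_pi1.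
Qed.

Lemma game_stay_commit_p1 c vr0 (pi1 : strategy) n : c \in U ->
  game_stay pi0 (commit_p1 c vr0 pi1) U n.+1 [::] c =
  #|vr0|%:R^-1 * \sum_(c' in vr0) game_stay pi0 pi1 U n [::] c'.
Proof.
move=> cU /=; rewrite cU.
have -> : commit_p1 c vr0 pi1 [:: V0v Act c; V1v (c, pi0 c)] = fun vr => (vr == vr0)%:R.
  by rewrite /commit_p1; case: asboolP.
rewrite (bigD1 vr0) //= eqxx mul1r [X in _ + X]big1 ?addr0 => [|vr /negbTE ->]; last first.
  by rewrite !mul0r.
congr (_ * _).
apply: eq_bigr => c' _; rewrite -[[:: _; _; _]]cats0; apply: game_stay_cat => h h_gt0.
rewrite /commit_p1; case: asboolP => [/(congr1 size)|_]; first by rewrite size_cat; case: h h_gt0.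
by case: h h_gt0.
Qed.

Lemma as_safe_succ c c' : Fund c (pi0 c) \subset Fbar c (pi0 c) ->
  c' \in Fbar c (pi0 c) -> as_safe c -> as_safe c'.
Proof.
move=> Fund_sub c'_succ c_safe pi1 valid_pi1 n.
pose vr0 := (c' |: Fund c (pi0 c))%SET.
have vr0_Vr : in_Vr Fbar Fund c (pi0 c) vr0.
  apply/and4P; split.
  - exact: finset.subsetUr.
  - by rewrite finset.subUset finset.sub1set c'_succ.
  - by rewrite card_gt0; apply/set0Pn; exists c'; rewrite setU11.
  - by rewrite cardsU1; case: (c' \notin _).
have := c_safe _ (valid_commit_p1 vr0_Vr valid_pi1) n.+1.
rewrite game_stay_commit_p1 ?(as_safe_in valid_pi1 c_safe) //.
apply: mean_eq1; first by rewrite setU11.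
by move=> c2 _; case/andP: (game_stay_ge0_le1 valid_pi1 n [::] c2).
Qed.

End game.

(* No measurability is needed: the integral of a nonnegative function is a
   supremum over the simple functions below it. *)
Lemma ge0_le_integral_nomeas d (S : measurableType d) (R : realType)
  (mu : {measure set S -> \bar R}) (D : set S) (f g : S -> \bar R) :
  (forall x, D x -> 0 <= f x)%E -> (forall x, D x -> f x <= g x)%E ->
  (\int[mu]_(x in D) f x <= \int[mu]_(x in D) g x)%E.
Proof.
move=> f_ge0 f_le_g.
have g_ge0 x : D x -> (0 <= g x)%E by move=> Dx; exact: le_trans (f_ge0 _ Dx) (f_le_g _ Dx).
rewrite !ge0_integralE //; apply: ge_ereal_sup => _ [h hf <-].
apply: ereal_sup_ubound; exists h => //= x; apply: le_trans (hf x) _.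
by rewrite /patch; case: ifP => // /set_mem Dx; exact: f_le_g.
Qed.

Lemma integral_le1 d (S : measurableType d) (R : realType) (mu : probability S R)
  (f : S -> \bar R) :
  (forall x, 0 <= f x <= 1)%E -> (\int[mu]_(x in setT) f x <= 1)%E.
Proof.
move=> f01; apply: (@le_trans _ _ (\int[mu]_(x in setT) (\1_setT x)%:E)%E).
  apply: ge0_le_integral_nomeas => x _; case/andP: (f01 x) => //.
  by rewrite indicT.
by rewrite integral_indic // setIT probability_le1.
Qed.

Section cmp.
Variables (d : measure_display) (S : measurableType d) (R : realType) (Act : finType).
Variables (T : S -> Act -> probability S R) (rho : S -> Act).

Lemma cmp_stay_ge0_le1 A n s : (0 <= cmp_stay T rho A n s <= 1)%E.
Proof.
elim: n s => [|n IH] s /=; rewrite indicE; case: (_ \in _); rewrite /= ?mul0e ?mul1e ?lee01 ?lexx //.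
rewrite integral_le1 // andbT.
by apply: integral_ge0 => x _; case/andP: (IH x).
Qed.

Lemma cmp_stay_invariant A B : measurable A -> A `<=` B ->
  (forall s, A s -> T s (rho s) A = 1%E) ->
  forall n s, A s -> cmp_stay T rho B n s = 1%E.
Proof.
move=> mA AB A_inv; elim=> [|n IH] s As; have Bs := AB s As.
  by rewrite /= indicE mem_set.
rewrite /= indicE mem_set // mulr1n mul1e.
apply/le_anti/andP; split.
  by apply: integral_le1 => x; exact: cmp_stay_ge0_le1.
rewrite -(A_inv s As) -[A]setIT -integral_indic //.
apply: ge0_le_integral_nomeas => x _; first by rewrite lee_fin.
rewrite indicE; have [/set_mem Ax|_] := boolP (x \in A); first by rewrite IH.
by case/andP: (cmp_stay_ge0_le1 B n x).
Qed.

Lemma cmp_always_invariant A B : measurable A -> A `<=` B ->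
  (forall s, A s -> T s (rho s) A = 1%E) ->
  forall s, A s -> cmp_always T rho B s = 1%E.
Proof.
move=> mA AB A_inv s As; rewrite /cmp_always.
suff -> : [set cmp_stay T rho B n s | n in [set: nat]] = [set 1%E].
  exact: ereal_inf1.
have stay1 := cmp_stay_invariant mA AB A_inv.
apply/seteqP; split=> [x [n _ <-]|x ->]; first exact: stay1.
by exists 0%N => //; exact: stay1.
Qed.

End cmp.

Section cells.
Variables (d : measure_display) (S : measurableType d) (Shat : finType) (Q : S -> Shat).
Hypothesis cell_measurable : forall c, measurable (cell Q c).

Lemma Qinv_bigsetU (A : {set Shat}) : Qinv Q A = \big[setU/set0]_(c in A) cell Q c.
Proof.
apply/seteqP; split=> [s /= QsA|].
  by rewrite (bigD1 (Q s)) //=; left.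
apply: (big_ind (fun X => X `<=` Qinv Q A)) => // [X Y XA YA|c cA s].
  by rewrite subUset.
by rewrite /cell /Qinv /= => ->.
Qed.

Lemma measurable_Qinv (A : {set Shat}) : measurable (Qinv Q A).
Proof. by rewrite Qinv_bigsetU; apply: bigsetU_measurable => c _. Qed.

Lemma probability_Qinv_eq1 (R : realType) (mu : probability S R) (W : {set Shat}) :
  (forall c, c \notin W -> mu (cell Q c) = 0%E) -> mu (Qinv Q W) = 1%E.
Proof.
move=> out_null.
have QinvC : Qinv Q (~: W)%SET = ~` Qinv Q W.
  by apply/seteqP; split=> s; rewrite /Qinv /= finset.in_setC => /negP.
rewrite -[Qinv Q W]setCK -QinvC probability_setC; last exact: measurable_Qinv.
rewrite Qinv_bigsetU (proj2 (big_ind (fun X => measurable X /\ mu X = 0%E) _ _ _)) ?sube0 //.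
- by move=> X Y [mX X0] [mY Y0]; split; [exact: measurableU | exact: null_set_setU].
- by move=> c; rewrite finset.in_setC => /out_null.
Qed.

End cells.

Section approximations.
Variables (d : measure_display) (S : measurableType d) (R : realType) (Act Shat : finType).
Variables (T : S -> Act -> probability S R) (Q : S -> Shat).
Variables (Fbar Fund : Shat -> Act -> {set Shat}).

Lemma over_approx_null s u c : over_approx T Q Fbar ->
  c \notin Fbar (Q s) u -> T s u (cell Q c) = 0%E.
Proof.
move=> over c_out; apply/eqP; rewrite eq_le measure_ge0 andbT leNgt.
by apply: contra c_out => pos; apply: over; exists s.
Qed.

Lemma under_approx_sub_over : (forall c, exists s, Q s = c) ->
  over_approx T Q Fbar -> under_approx T Q Fund ->
  forall c u, Fund c u \subset Fbar c u.
Proof.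
move=> cell_ne over under c u; apply/fintype.subsetP => c' /under [eps [eps_gt0 eps_le]].
have [s Qs] := cell_ne c; apply: over; exists s; split=> //.
by apply: lt_le_trans (eps_le s Qs); rewrite lte_fin.
Qed.

End approximations.

Theorem proposition1 (d : measure_display) (S : measurableType d)
  (R : realType) (Act Shat : finType)
  (T : S -> Act -> probability S R)
  (l : nat) (B : 'I_l -> set S)
  (Q : S -> Shat) (Fbar Fund : Shat -> Act -> {set Shat})
  (U : {set Shat}) (v : Shat) (pi0 : Shat -> Act) :
  is_stoch_kernel T ->
  is_meas_partition B ->
  is_abstraction B Q ->
  over_approx T Q Fbar ->
  under_approx T Q Fund ->
  v \in U ->
  ereal_inf [set game_always pi0 pi1 U v
            | pi1 in [set p : p1_strategy R Shat Act | valid_p1 Fbar Fund p]]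
    = 1%E ->
  forall s : S, Q s = v ->
    cmp_always T (refinement Q pi0) (Qinv Q U) s = 1%E.
Proof.
move=> _ _ [cell_meas [cell_ne _]] over under _ inf1 s Qs.
have [pi1 valid_pi1] := valid_p1_exists inf1.
have Fund_sub := under_approx_sub_over cell_ne over under.
pose W := [set c | `[< as_safe R Fbar Fund pi0 U c >]]%SET.
have safeW c : c \in W -> as_safe R Fbar Fund pi0 U c by rewrite finset.inE => /asboolP.
apply: (cmp_always_invariant (A := Qinv Q W)).
- exact: measurable_Qinv.
- by move=> x /safeW /(as_safe_in valid_pi1).
- move=> x /safeW x_safe; apply: probability_Qinv_eq1 => // c.
  apply: contraNeq => /eqP c_reach; rewrite finset.inE; apply/asboolP.
  apply: as_safe_succ x_safe; first exact: Fund_sub.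
  by apply: contrapT => /negP /(over_approx_null (s := x) over).
- by rewrite /Qinv /= Qs finset.inE; apply/asboolP; exact: as_safe_of_inf.
Qed.
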